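(* Let $(X_n)_{n\ge1}$ be a sequence of finite sets and $(a_n(q))$ a $q$-Euler–Gauss sequence. Let $n\ge1$ be such that $a_d(1)\neq0$ for every divisor $d$ of $n$ for which $n/d$ is not a prime power. If $|X_d|=a_d(1)$ for all $d\mid n$ and $\mathbb{Z}_n$ acts on $X_n$ so that $|X_n^i|=|X_{\gcd(n,i)}|$ for all $i\in\mathbb{Z}_n$, then the triple $(X_n,\mathbb{Z}_n,a_n(q))$ exhibits the cyclic sieving phenomenon.
   Context: $\mu$ is the Möbius function, $[n]_q=1+q+\dots+q^{n-1}$; polynomial congruences modulo $[n]_q$ mean divisibility of the difference by $[n]_q$ in $\mathbb{Z}[q]$. A sequence $(a_n(q))$ in $\mathbb{Z}[q]$ is a $q$-Euler–Gauss sequence if for all $n\ge1$, $\prod_{d\mid n,\,\mu(d)=1}a_{n/d}(q^d)\equiv\prod_{d\mid n,\,\mu(d)=-1}a_{n/d}(q^d)\pmod{[n]_q}$. Here ''$n/d$ is not a prime power'' means $n/d$ has at least two distinct prime divisors ($1=p^0$ counts as a prime power). $\mathbb{Z}_n$ is the additive group of integers mod $n$, elements $i$ identified with integer representatives; $X_n^i$ is the fixed point set of $i$. A triple $(X,\mathbb{Z}_n,f(q))$ exhibits the cyclic sieving phenomenon if $|X^i|=f(\omega_n^i)$ for all $i\in\mathbb{Z}_n$, where $\omega_n$ is a primitive $n$-th root of unity. *)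

From HB Require Import structures.
From mathcomp Require Import all_boot all_order all_algebra all_field.
Set Implicit Arguments. Unset Strict Implicit. Unset Printing Implicit Defensive.
Import Order.TTheory GRing.Theory Num.Theory.
Local Open Scope ring_scope.

(* Moebius function (value at 0 is irrelevant; set to 0). *)
Definition moebius (n : nat) : int :=
  if n is 0 then 0
  else if all (fun p => logn p n == 1)%N (primes n)
       then (-1) ^+ size (primes n) else 0.

Definition qint (n : nat) : {poly int} := \sum_(i < n) 'X^i.

Definition poly_congr (P Q m : {poly int}) : Prop :=
  exists c : {poly int}, P - Q = c * m.

Definition qEulerGauss (a : nat -> {poly int}) : Prop :=
  forall n : nat, (0 < n)%N ->
    poly_congr
      (\prod_(d <- divisors n | moebius d == 1) ((a (n %/ d)%N) \Po 'X^d))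
      (\prod_(d <- divisors n | moebius d == -1) ((a (n %/ d)%N) \Po 'X^d))
      (qint n).

Definition not_prime_power (m : nat) : bool := (1 < size (primes m))%N.

(* A Z_n-action on T, given as a Z-action that factors through Z_n:
   act i is the action of the class of i. *)
Definition is_Zn_action (n : nat) (T : finType) (act : nat -> T -> T) : Prop :=
  [/\ forall x, act 0%N x = x,
      forall i j x, act (i + j)%N x = act i (act j x)
    & forall x, act n x = x].

Definition fixpts (T : finType) (act : nat -> T -> T) (i : nat) : {set T} :=
  [set x | act i x == x].

Definition CSP (n : nat) (T : finType) (act : nat -> T -> T) (f : {poly int})
  (w : algC) : Prop :=
  forall i : nat, (i < n)%N ->
    (#|fixpts act i|)%:R = (map_poly intr f).[w ^+ i].

From HB Require Import structures.
From mathcomp Require Import all_boot all_order all_algebra all_field.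
Import Order.TTheory GRing.Theory Num.Theory.
Local Open Scope ring_scope.

(* Let [m > 1] divide [n] and let [z] be a primitive [m]-th root of unity.
   As [[n]_z = 0], evaluating the Euler-Gauss congruence at [z] gives a
   multiplicative Moebius identity between the values [a_{n/d}(z^d)],
   [d | n].  By induction on [n], [a_{n/d}(z^d) = a_{n/lcm(d,m)}(1)] for
   [d > 1].  Fix a prime [p | m]: the terms of index [d] and [dp], for [d]
   squarefree and prime to [p], carry opposite Moebius signs and equal
   values, and these values are nonzero for [d > 1] because [lcm(d,m)] is not
   a prime power.  Cancelling them leaves [a_n(z) = a_{n/m}(1)].  With
   [z = w^i] this reads [a_n(w^i) = a_{gcd(n,i)}(1) = |X_{gcd(n,i)}|]. *)

Lemma moebiusE n : (0 < n)%N ->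
  moebius n = if all (fun p => logn p n == 1)%N (primes n)
              then (-1) ^+ size (primes n) else 0.
Proof. by case: n. Qed.

Lemma moebius_neq0 n : moebius n != 0 ->
  (0 < n)%N /\ {in primes n, forall p, logn p n = 1%N}.
Proof.
case: n => [|n]; first by rewrite eqxx.
rewrite /moebius; case: ifP => [/allP logn1 _|]; last by rewrite eqxx.
by split=> // p /logn1/eqP.
Qed.

Lemma moebius_neq0_sqr_ndvd [p n] : prime p -> moebius n != 0 -> ~~ (p * p %| n)%N.
Proof.
move=> p_pr /moebius_neq0 [n_gt0 logn1]; apply/negP => pp_dvd_n.
have p_n : p \in primes n.
  by rewrite mem_primes p_pr n_gt0 (dvdn_trans (dvdn_mulr p (dvdnn p)) pp_dvd_n).
have : (2 <= logn p n)%N by rewrite -pfactor_dvdn // expnS expn1.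
by rewrite logn1.
Qed.

Lemma moebiusMprime [p d] : prime p -> (0 < d)%N -> ~~ (p %| d)%N ->
  moebius (d * p) = - moebius d.
Proof.
move=> p_pr d_gt0 p_ndvd_d; have p_gt0 := prime_gt0 p_pr.
have p_nd : p \notin primes d by rewrite mem_primes p_pr d_gt0 (negPf p_ndvd_d) andbF.
have primes_dp : perm_eq (primes (d * p)) (p :: primes d).
  apply: uniq_perm; rewrite ?primes_uniq //= ?primes_uniq ?p_nd // => q.
  by rewrite primesM // (primes_prime p_pr) in_cons in_nil orbF orbC.
have logp : logn p (d * p) = 1%N.
  by rewrite lognM // logn_coprime ?prime_coprime // (logn_prime p p_pr) eqxx.
have logq : {in primes d, forall q, logn q (d * p) = logn q d}.
  move=> q q_d; have q_neq_p : q != p by apply: contraNneq p_nd => <-.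
  by rewrite lognM // (logn_prime q p_pr) (negPf q_neq_p) addn0.
rewrite !moebiusE ?muln_gt0 ?d_gt0 // (perm_all _ primes_dp) (perm_size primes_dp).
rewrite /= logp eqxx (eq_in_all (a2 := fun q => logn q d == 1)%N); last first.
  by move=> q /logq /= ->.
by case: all; rewrite /= ?exprS ?mulN1r ?oppr0.
Qed.

Lemma not_prime_power_dvd [m n] : (0 < n)%N -> (m %| n)%N ->
  not_prime_power m -> not_prime_power n.
Proof.
move=> n_gt0 m_dvd_n /leq_trans; apply; apply: uniq_leq_size => [|q].
  exact: primes_uniq.
by rewrite !mem_primes n_gt0 => /and3P [-> _ /dvdn_trans->].
Qed.

Lemma not_prime_power_lcm [p d m] : prime p -> (p %| m)%N -> ~~ (p %| d)%N ->
  (1 < d)%N -> (0 < m)%N -> not_prime_power (lcmn d m).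
Proof.
move=> p_pr p_dvd_m p_ndvd_d d_gt1 m_gt0.
have q_pr := pdiv_prime d_gt1; have q_dvd_d := pdiv_dvd d.
have q_neq_p : pdiv d != p by apply: contraNneq p_ndvd_d => <-.
have lcm_gt0 : (0 < lcmn d m)%N by rewrite lcmn_gt0 m_gt0 ltnW.
apply: (@leq_trans (size [:: pdiv d; p])) => //.
apply: uniq_leq_size => [|q]; first by rewrite /= inE q_neq_p.
rewrite !inE => /orP [] /eqP ->; rewrite mem_primes ?q_pr ?p_pr lcm_gt0 /=.
  exact: dvdn_trans q_dvd_d (dvdn_lcml d m).
exact: dvdn_trans p_dvd_m (dvdn_lcmr d m).
Qed.

Lemma lcmn_divgcd d m : (0 < d)%N -> lcmn d m = (d * (m %/ gcdn d m))%N.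
Proof. by move=> d_gt0; rewrite /lcmn muln_divA // dvdn_gcdr. Qed.

Lemma lcmn_mul_coprime [d p m] : coprime d p -> (p %| m)%N ->
  lcmn (d * p) m = lcmn d m.
Proof.
move=> co_dp p_dvd_m.
have -> : (d * p)%N = lcmn d p by rewrite -(muln1 (lcmn d p)) -(eqP co_dp) muln_lcm_gcd.
by rewrite -lcmnA (lcmn_idPr p_dvd_m).
Qed.

Lemma divisor_gt1 [N d : nat] : (0 < N)%N -> d \in divisors N -> d != 1%N -> (1 < d)%N.
Proof.
by move=> N_gt0; rewrite -dvdn_divisors // ltn_neqAle eq_sym => /(dvdn_gt0 N_gt0) -> ->.
Qed.

Section MoebiusPairing.

Context {R : idomainType} {N p : nat}.
Hypotheses (N_gt0 : (0 < N)%N) (p_prime : prime p) (p_dvd_N : (p %| N)%N).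

Lemma prod_moebius_pdvd (F : nat -> R) s : s != 0 ->
  \prod_(d <- divisors N | (moebius d == s) && (p %| d)%N) F d =
  \prod_(d <- divisors N | (moebius d == - s) && ~~ (p %| d)%N) F (d * p)%N.
Proof.
move=> s_neq0; have p_gt0 := prime_gt0 p_prime.
rewrite -big_filter -[RHS]big_filter -(big_map (fun d => d * p)%N xpredT F).
apply/perm_big/uniq_perm; first by rewrite filter_uniq ?divisors_uniq.
  rewrite map_inj_uniq ?filter_uniq ?divisors_uniq //.
  by move=> x y /eqP; rewrite eqn_pmul2r // => /eqP.
move=> x; rewrite mem_filter -dvdn_divisors //; apply/andP/mapP.
- case=> /andP [/eqP mu_x p_dvd_x] x_dvd_N.
  have x_gt0 := dvdn_gt0 N_gt0 x_dvd_N.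
  have p_ndvd_xp : ~~ (p %| x %/ p)%N.
    by rewrite dvdn_divRL // moebius_neq0_sqr_ndvd // mu_x.
  have xp_gt0 : (0 < x %/ p)%N by rewrite divn_gt0 // dvdn_leq.
  exists (x %/ p)%N; last by rewrite divnK.
  rewrite mem_filter -dvdn_divisors // p_ndvd_xp.
  rewrite (dvdn_trans (dvdn_div p_dvd_x) x_dvd_N).
  have := moebiusMprime p_prime xp_gt0 p_ndvd_xp.
  by rewrite divnK // mu_x => ->; rewrite opprK eqxx.
- case=> d; rewrite mem_filter -dvdn_divisors //.
  move=> /andP [/andP [/eqP mu_d p_ndvd_d] d_dvd_N] ->.
  rewrite moebiusMprime ?(dvdn_gt0 N_gt0) // mu_d opprK eqxx dvdn_mull //=.
  by rewrite Gauss_dvd ?d_dvd_N // coprime_sym prime_coprime.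
Qed.

Lemma prod_moebius_split (F : nat -> R) s : s != 0 ->
  \prod_(d <- divisors N | moebius d == s) F d =
  \prod_(d <- divisors N | (moebius d == s) && ~~ (p %| d)%N) F d *
  \prod_(d <- divisors N | (moebius d == - s) && ~~ (p %| d)%N) F (d * p)%N.
Proof.
by move=> s_neq0; rewrite (bigID (fun d => p %| d)%N) /= mulrC prod_moebius_pdvd.
Qed.

Lemma prod_moebius1_ndvd (G : nat -> R) :
  \prod_(d <- divisors N | (moebius d == 1) && ~~ (p %| d)%N) G d =
  G 1%N * \prod_(d <- divisors N | [&& moebius d == 1, ~~ (p %| d)%N & d != 1%N]) G d.
Proof.
rewrite -big_filter (bigD1_seq 1%N) ?filter_uniq ?divisors_uniq //.
  by rewrite big_filter_cond; under eq_bigl do rewrite -andbA.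
by rewrite mem_filter divisor1 Euclid_dvd1.
Qed.

Context {F : nat -> R}.
Hypothesis F_mulp : forall d, (d %| N)%N -> (1 < d)%N -> ~~ (p %| d)%N ->
  F (d * p)%N = F d.
Hypothesis F_neq0 : forall d, (d %| N)%N -> (1 < d)%N -> ~~ (p %| d)%N ->
  F d != 0.

Section ProperIndices.

Variable Q : pred nat.
Hypothesis Q_proper : {in divisors N, forall d, Q d -> ~~ (p %| d)%N && (d != 1%N)}.

Lemma prod_F_mulp :
  \prod_(d <- divisors N | Q d) F (d * p)%N = \prod_(d <- divisors N | Q d) F d.
Proof.
rewrite big_seq_cond [RHS]big_seq_cond; apply: eq_bigr => d.
case/andP=> d_N /(Q_proper _ d_N) /andP [p_nd /(divisor_gt1 N_gt0 d_N) d_gt1].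
by rewrite F_mulp // dvdn_divisors.
Qed.

Lemma prod_F_neq0 : \prod_(d <- divisors N | Q d) F d != 0.
Proof.
rewrite prodf_seq_neq0; apply/allP => d d_N; apply/implyP.
case/(Q_proper _ d_N)/andP=> p_nd /(divisor_gt1 N_gt0 d_N) d_gt1.
by rewrite F_neq0 // dvdn_divisors.
Qed.

End ProperIndices.

Lemma prod_moebius_pair_eq :
  \prod_(d <- divisors N | moebius d == 1) F d =
  \prod_(d <- divisors N | moebius d == -1) F d -> F 1%N = F p.
Proof.
pose P1 d := [&& moebius d == 1, ~~ (p %| d)%N & d != 1%N].
pose Pm d := (moebius d == -1) && ~~ (p %| d)%N.
have P1_proper : {in divisors N, forall d, P1 d -> ~~ (p %| d)%N && (d != 1%N)}.
  by move=> d _ /and3P [_ -> ->].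
have Pm_proper : {in divisors N, forall d, Pm d -> ~~ (p %| d)%N && (d != 1%N)}.
  by move=> d _ /andP [/eqP mu_d ->]; apply: contra_eqN mu_d => /eqP ->.
have mu_neq0 : (-1 : int) != 0 by rewrite oppr_eq0 oner_eq0.
rewrite (prod_moebius_split F 1 (oner_neq0 _)) (prod_moebius_split F (-1) mu_neq0).
rewrite opprK !prod_moebius1_ndvd !prod_F_mulp // mul1n => E.
apply/(mulIf (prod_F_neq0 _ Pm_proper))/(mulIf (prod_F_neq0 _ P1_proper)).
by rewrite mulrAC E mulrCA mulrA.
Qed.

End MoebiusPairing.

Definition evalZ {R : comNzRingType} (P : {poly int}) (z : R) : R :=
  (map_poly intr P).[z].

Lemma evalZ_compXn (R : comNzRingType) P d (z : R) :
  evalZ (P \Po 'X^d) z = evalZ P (z ^+ d).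
Proof. by rewrite /evalZ map_comp_poly horner_comp map_polyXn hornerXn. Qed.

Lemma evalZB (R : comNzRingType) P Q (z : R) : evalZ (P - Q) z = evalZ P z - evalZ Q z.
Proof. by rewrite /evalZ rmorphB hornerD hornerN. Qed.

Lemma evalZM (R : comNzRingType) P Q (z : R) : evalZ (P * Q) z = evalZ P z * evalZ Q z.
Proof. by rewrite /evalZ rmorphM hornerM. Qed.

Lemma evalZ_prod (R : comNzRingType) I (r : seq I) (Pr : pred I) F (z : R) :
  evalZ (\prod_(i <- r | Pr i) F i) z = \prod_(i <- r | Pr i) evalZ (F i) z.
Proof. by rewrite /evalZ rmorph_prod horner_prod. Qed.

Lemma evalZ_at1 (R : comNzRingType) P : evalZ P (1 : R) = P.[1]%:~R.
Proof. by rewrite /evalZ -(rmorph1 intr) horner_map. Qed.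

Lemma evalZ_qint_root (R : idomainType) N (z : R) :
  z ^+ N = 1 -> z != 1 -> evalZ (qint N) z = 0.
Proof.
move=> zN z_neq1; have -> : evalZ (qint N) z = \sum_(i < N) z ^+ i.
  rewrite /evalZ rmorph_sum horner_sum; apply: eq_bigr => i _.
  by rewrite /= map_polyXn hornerXn.
have /eqP : (z - 1) * \sum_(i < N) z ^+ i = 0 by rewrite -subrX1 zN subrr.
by rewrite mulf_eq0 subr_eq0 (negPf z_neq1) => /eqP.
Qed.

Lemma qEulerGauss_root [R : idomainType] [a N] [z : R] :
  qEulerGauss a -> (0 < N)%N -> z ^+ N = 1 -> z != 1 ->
  \prod_(d <- divisors N | moebius d == 1) evalZ (a (N %/ d)%N) (z ^+ d) =
  \prod_(d <- divisors N | moebius d == -1) evalZ (a (N %/ d)%N) (z ^+ d).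
Proof.
move=> aEG N_gt0 zN z_neq1; have [c congr_a] := aEG N N_gt0.
have evalZ_terms s :
    evalZ (\prod_(d <- divisors N | moebius d == s) (a (N %/ d)%N \Po 'X^d)) z =
    \prod_(d <- divisors N | moebius d == s) evalZ (a (N %/ d)%N) (z ^+ d).
  by rewrite evalZ_prod; apply: eq_bigr => d _; rewrite evalZ_compXn.
have /eqP := congr1 (evalZ ^~ z) congr_a.
by rewrite /= evalZB evalZM evalZ_qint_root // mulr0 subr_eq0 !evalZ_terms => /eqP.
Qed.

Definition nonvanishing (a : nat -> {poly int}) (N : nat) : Prop :=
  forall d, (d %| N)%N -> not_prime_power (N %/ d) -> (a d).[1] != 0.

Lemma nonvanishing_div [a N d] : (0 < N)%N -> (d %| N)%N ->
  nonvanishing a N -> nonvanishing a (N %/ d).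
Proof.
move=> N_gt0 d_dvd_N aN e e_dvd_Nd npp.
have ed_dvd_N : (e * d %| N)%N by rewrite -dvdn_divRL.
have e_dvd_N : (e %| N)%N := dvdn_trans (dvdn_mulr d (dvdnn e)) ed_dvd_N.
apply: aN => //; apply: not_prime_power_dvd npp.
  by rewrite divn_gt0 ?(dvdn_gt0 N_gt0 e_dvd_N) // dvdn_leq.
by rewrite -divnMA mulnC divnMA; apply: dvdn_div; rewrite dvdn_divRL // mulnC.
Qed.

Section PrimitiveRootStep.

Context {R : numDomainType} {a : nat -> {poly int}} {N m : nat} {z : R}.
Hypotheses (aEG : qEulerGauss a) (N_gt0 : (0 < N)%N) (aN : nonvanishing a N).
Hypotheses (m_dvd_N : (m %| N)%N) (m_gt1 : (1 < m)%N) (zm : m.-primitive_root z).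
Hypothesis eval_lcm : forall d, (d %| N)%N -> (1 < d)%N ->
  evalZ (a (N %/ d)%N) (z ^+ d) = (a (N %/ lcmn d m)%N).[1]%:~R.

Lemma qEulerGauss_prim_root_step : evalZ (a N) z = (a (N %/ m)%N).[1]%:~R.
Proof.
pose F d := evalZ (a (N %/ d)%N) (z ^+ d).
have m_gt0 := ltnW m_gt1; have p_prime : prime (pdiv m) := pdiv_prime m_gt1.
have p_dvd_m := pdiv_dvd m; have p_dvd_N := dvdn_trans p_dvd_m m_dvd_N.
have F_mulp d : (d %| N)%N -> (1 < d)%N -> ~~ (pdiv m %| d)%N -> F (d * pdiv m)%N = F d.
  move=> d_dvd_N d_gt1 p_ndvd_d.
  have co_dp : coprime d (pdiv m) by rewrite coprime_sym prime_coprime.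
  have dp_gt1 : (1 < d * pdiv m)%N.
    by rewrite (leq_trans d_gt1) // leq_pmulr // prime_gt0.
  by rewrite /F !eval_lcm // ?lcmn_mul_coprime // Gauss_dvd // d_dvd_N.
have F_neq0 d : (d %| N)%N -> (1 < d)%N -> ~~ (pdiv m %| d)%N -> F d != 0.
  move=> d_dvd_N d_gt1 p_ndvd_d.
  have L_dvd_N : (lcmn d m %| N)%N by rewrite dvdn_lcm d_dvd_N.
  rewrite /F eval_lcm // intr_eq0; apply: aN; first exact: dvdn_div.
  rewrite divnA // mulKn //; exact: not_prime_power_lcm p_dvd_m p_ndvd_d d_gt1 m_gt0.
have z_neq1 : z != 1.
  apply: contraTneq m_gt1 => z1.
  by rewrite -leqNgt dvdn_leq // (prim_order_dvd zm) z1 expr1.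
have zN : z ^+ N = 1 by apply/eqP; rewrite -(prim_order_dvd zm).
have F1 : F 1%N = evalZ (a N) z by rewrite /F divn1 expr1.
rewrite -F1 (prod_moebius_pair_eq N_gt0 p_prime p_dvd_N F_mulp F_neq0).
  by rewrite /F eval_lcm ?prime_gt1 // (lcmn_idPr p_dvd_m).
exact: qEulerGauss_root.
Qed.

End PrimitiveRootStep.

Lemma qEulerGauss_prim_root [R : numDomainType] [a N m] [z : R] :
  qEulerGauss a -> (0 < N)%N -> nonvanishing a N -> (m %| N)%N ->
  m.-primitive_root z -> evalZ (a N) z = (a (N %/ m)%N).[1]%:~R.
Proof.
move=> aEG; elim/ltn_ind: N m z => N IH m z N_gt0 aN m_dvd_N zm.
have [m_le1 | m_gt1] := leqP m 1.
  have m1 : m = 1%N by apply/eqP; rewrite eqn_leq m_le1 (prim_order_gt0 zm).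
  move: zm; rewrite m1 => /prim_expr_order; rewrite expr1 => ->.
  by rewrite evalZ_at1 divn1.
apply: (qEulerGauss_prim_root_step aEG N_gt0 aN m_dvd_N m_gt1 zm) => d d_dvd_N d_gt1.
have d_gt0 := ltnW d_gt1.
rewrite (IH _ _ (m %/ gcdn d m)%N _ _ (nonvanishing_div N_gt0 d_dvd_N aN)).
- by rewrite lcmn_divgcd // divnMA.
- exact: ltn_Pdiv.
- by rewrite divn_gt0 // dvdn_leq.
- by rewrite dvdn_divRL // mulnC -lcmn_divgcd // dvdn_lcm d_dvd_N.
exact: exp_prim_root.
Qed.

Theorem corollary2 (X : nat -> finType) (a : nat -> {poly int}) (n : nat)
  (act : nat -> X n -> X n) :
  qEulerGauss a ->
  (0 < n)%N ->
  (forall d : nat, (d %| n)%N -> not_prime_power (n %/ d) -> (a d).[1] != 0) ->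
  (forall d : nat, (d %| n)%N -> (#|X d|)%:Z = (a d).[1]) ->
  is_Zn_action n act ->
  (forall i : nat, (i < n)%N -> #|fixpts act i| = #|X (gcdn n i)|) ->
  forall w : algC, n.-primitive_root w -> CSP n act (a n) w.
Proof.
move=> aEG n_gt0 an X_card _ fix_card w wn i i_lt_n.
have g_dvd_n : (gcdn i n %| n)%N := dvdn_gcdr i n.
rewrite fix_card // -/(evalZ (a n) (w ^+ i)).
rewrite (qEulerGauss_prim_root aEG n_gt0 an (dvdn_div g_dvd_n) (exp_prim_root wn i)).
by rewrite divnA // mulKn // gcdnC -X_card ?dvdn_gcdl.
Qed.
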